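(* Let $h\ge 2$ be an integer and $\lambda_G,\lambda_L,\gamma>0$. Let $S=\{(a,b): a\ge 1,\ b\ge 1,\ a+b\le h\}\cup\{(0,1)^\ast\}$ and let $\mathbf{P}=(p_{s,t})_{s,t\in S}$, $\Phi=(\phi_{s,t})_{s,t\in S}$ be the matrices whose only non-zero entries are as follows: for $(a,b)\in S$ with $a\ge 1$, $p_{(a,b),(a-1,b+1)}=\frac{a\lambda_L}{a\lambda_L+\gamma}$ and $\phi_{(a,b),(a-1,b+1)}=\frac{a\lambda_L}{b(a\lambda_L+\gamma)}$ if $a>1$; $p_{(1,b),(0,1)^\ast}=\frac{\lambda_L}{\lambda_L+\gamma}$ and $\phi_{(1,b),(0,1)^\ast}=\frac{\lambda_L}{b(\lambda_L+\gamma)}$; $p_{(a,b),(a,b-1)}=\frac{(b-1)\gamma}{b(a\lambda_L+\gamma)}$ if $b\ge 2$; $\phi_{(a,b),(h-1,1)}=\frac{\lambda_G}{b(a\lambda_L+\gamma)}$; and $\phi_{(0,1)^\ast,(h-1,1)}=\lambda_G/\gamma$ (the row of $\mathbf{P}$ indexed by $(0,1)^\ast$ is zero). Let $\mathbf{M}=(\mathbf{I}-\mathbf{P})^{-1}\Phi$ and $\mu_G=\lambda_G/\gamma$. For $i=0,\ldots,h-1$ let $\mu_i$ be the mean number of infectives in generation $i$ of the single-household epidemic described in the context, and let $\mathbf{A}$ be the $h\times h$ matrix with first column $(\mu_G\mu_0,\mu_G\mu_1,\ldots,\mu_G\mu_{h-1})^\top$, entries $A_{i,i+1}=1$ for $i=1,\ldots,h-1$,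 and all other entries $0$. Then the largest (Perron–Frobenius) eigenvalue of $\mathbf{M}$ equals the largest eigenvalue of $\mathbf{A}$; that is, the basic reproduction number $R_0$ defined as the maximal eigenvalue of $\mathbf{M}$ coincides with the generational basic reproduction number $R_0^g$ (the maximal eigenvalue of $\mathbf{A}$).
   Context: Markovian SIR household epidemic: the population is partitioned into households of size $h$. Each infective remains infectious for an exponentially distributed time with rate $\gamma$ (independently); whilst infectious it makes global contacts at rate $\lambda_G$ with individuals chosen uniformly from the (large) population, each such contact in the early stages creating a new infectious household in state $(h-1,1)$, and makes contacts with each other given member of its household at rate $\lambda_L$; contacted susceptibles immediately become infectious. A state $(a,b)$ denotes a household with $a$ susceptibles and $b$ infectives; states with no susceptibles are amalgamated into $(0,1)^\ast$. $\mathbf{M}$ is the mean reproduction matrix: $m_{s,t}$ is the mean number of type-$t$ infectives generated by an individual infected as a member of a type-$s$ infectious unit. Single-household epidemic and generations: in a household with one initial infective and $h-1$ susceptibles evolving with local contacts only, the initial infective is in generation $0$, and an individual infected by a generation-$(i-1)$ infective is in generation $i$; $\mu_i$ is the expected number of generation-$i$ infectives. *)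

From HB Require Import structures.
From mathcomp Require Import all_boot all_order all_algebra.
From mathcomp Require Import reals.
Set Implicit Arguments. Unset Strict Implicit. Unset Printing Implicit Defensive.
Import Order.TTheory GRing.Theory Num.Theory.
Local Open Scope ring_scope.

Definition Sab (h : nat) :=
  {x : 'I_h.+1 * 'I_h.+1 | [&& (0 < x.1)%N, (0 < x.2)%N & (x.1 + x.2 <= h)%N]}.
(* None stands for the amalgamated state (0,1)^* . *)
Definition Stype (h : nat) := option (Sab h).

Definition sa h (x : Sab h) : nat := (sval x).1.
Definition sb h (x : Sab h) : nat := (sval x).2.

Section Matrices.
Variables (R : realType) (h : nat) (lG lL g : R).

Definition Pent (s t : Stype h) : R :=
  match s with
  | None => 0
  | Some x =>
    let a := sa x in let b := sb x in
    match t with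
    | None => if a == 1%N then lL / (lL + g) else 0
    | Some y =>
      let a' := sa y in let b' := sb y in
      (if [&& (1 < a)%N, a' == a.-1 & b' == b.+1]
       then a%:R * lL / (a%:R * lL + g) else 0)
      + (if [&& (2 <= b)%N, a' == a & b' == b.-1]
         then (b.-1)%:R * g / (b%:R * (a%:R * lL + g)) else 0)
    end
  end.

Definition Phient (s t : Stype h) : R :=
  match s with
  | None =>
    match t with
    | None => 0
    | Some y => if (sa y == h.-1) && (sb y == 1%N) then lG / g else 0
    end
  | Some x =>
    let a := sa x in let b := sb x in
    match t with
    | None => if a == 1%N then lL / (b%:R * (lL + g)) else 0
    | Some y =>
      let a' := sa y in let b' := sb y in
      (if [&& (1 < a)%N, a' == a.-1 & b' == b.+1]
       then a%:R * lL / (b%:R * (a%:R * lL + g)) else 0)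
      + (if (a' == h.-1) && (b' == 1%N)
         then lG / (b%:R * (a%:R * lL + g)) else 0)
    end
  end.

Definition nS := #|{: Stype h}|.

Definition Pmx : 'M[R]_nS :=
  \matrix_(i, j) Pent (enum_val i) (enum_val j).
Definition Phimx : 'M[R]_nS :=
  \matrix_(i, j) Phient (enum_val i) (enum_val j).

Definition Mmx : 'M[R]_nS := invmx (1%:M - Pmx) *m Phimx.

(* State of the embedded jump chain: a = number of susceptibles,
   b j = number of currently infectious individuals of generation j.
   Events: an infective of generation j infects one of the a susceptibles
   (total rate b j * a * lL), creating a generation-(j+1) infective; or an
   infective of generation j recovers (total rate b j * g).
   Egen k i a b = expected number of generation-i infections occurring
   from state (a,b) onwards (k = fuel, 2h suffices). *)
Definition incr (b : nat -> nat) (j : nat) : nat -> nat :=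
  fun k => if k == j then (b k).+1 else b k.
Definition decr (b : nat -> nat) (j : nat) : nat -> nat :=
  fun k => if k == j then (b k).-1 else b k.

Fixpoint Egen (k i a : nat) (b : nat -> nat) : R :=
  match k with
  | O => 0
  | k'.+1 =>
    let tot := (\sum_(j < h) b j)%N in
    if tot == 0%N then 0 else
    let rate := tot%:R * (a%:R * lL + g) in
    \sum_(j < h) ((b j)%:R * a%:R * lL / rate) *
                 ((j.+1 == i)%:R + Egen k' i a.-1 (incr b j.+1))
    + \sum_(j < h) ((b j)%:R * g / rate) * Egen k' i a (decr b j)
  end.

Definition b_init : nat -> nat := fun k => if k == 0%N then 1%N else 0%N.

Definition mu (i : nat) : R :=
  (i == 0%N)%:R + Egen (2 * h) i h.-1 b_init.

Definition muG : R := lG / g.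

(* A: first column (muG mu_0, ..., muG mu_{h-1}), A_{i,i+1} = 1 (1-indexed);
   here 0-indexed. *)
Definition Amx : 'M[R]_h :=
  \matrix_(i, j) (if (j : nat) == 0%N then muG * mu i
                  else if (j : nat) == i.+1 then 1 else 0).

End Matrices.

From HB Require Import structures.
From mathcomp Require Import all_boot all_order all_algebra.
From mathcomp Require Import reals.
From mathcomp Require Import zify ring.
Import Order.TTheory GRing.Theory Num.Theory.
Local Open Scope ring_scope.
Set Implicit Arguments. Unset Strict Implicit. Unset Printing Implicit Defensive.

(* For x > 0, x is an eigenvalue of A, and also of M, iff charF x = x, where
   charF x = muG * sum_k mu_k x^-k.  For A, a left eigenvector is geometric.
   For M, let q_k(a,b) be the mean number of descendants at generation distance
   k of one infective in a household with a susceptibles and b infectives; the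
   mean generation sizes are linear in the generation profile of the household
   chain, whence mu_k = [k = 0] + q_k(h-1,1).  The vector equal to
   1 + sum_k q_k(a,b) x^-k at type (a,b) and to 1 at (0,1)^* satisfies the
   first-step recursion of the household chain, so it is an eigenvector of M
   exactly when charF x = x; up to scaling it is the only candidate, because
   that recursion is triangular.  Finally charF is nonincreasing on (0, oo) and
   crosses the diagonal, so its fixed point is the largest eigenvalue of both
   matrices. *)

Lemma big_option (R : Type) (idx : R) (op : Monoid.law idx) (T : finType)
    (F : option T -> R) :
  \big[op/idx]_(t : option T) F t = op (F None) (\big[op/idx]_(x : T) F (Some x)).
Proof.
by rewrite ![index_enum _]unlock [@Finite.enum in LHS]unlock /= big_cons big_map.
Qed.

Lemma sum_mulr_addr (R : comPzRingType) (I : finType) (w u : I -> R) k c :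
  \sum_i w i * (k * (u i + c)) = k * (\sum_i w i * u i + (\sum_i w i) * c).
Proof.
rewrite mulr_suml -big_split mulr_sumr /=; apply: eq_bigr => i _; ring.
Qed.

Section Eigenvalues.
Variables (F : fieldType) (n : nat).
Implicit Type A : 'M[F]_n.

Lemma eigenvalue_unitmx A a : eigenvalue A a = (A - a%:M \notin unitmx).
Proof. by rewrite /eigenvalue /eigenspace kermx_eq0 row_free_unit. Qed.

Lemma eigenvalue_tr A a : eigenvalue A^T a = eigenvalue A a.
Proof. by rewrite !eigenvalue_unitmx -unitmx_tr linearB /= tr_scalar_mx trmxK. Qed.

Lemma eigenvalue_colP A a :
  reflect (exists2 v : 'cV_n, A *m v = a *: v & v != 0) (eigenvalue A a).
Proof.
rewrite -eigenvalue_tr; apply: (iffP eigenvalueP) => -[v Av v0]; exists v^T;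
  rewrite ?trmx_eq0 //.
- by rewrite -[A]trmxK -trmx_mul Av linearZ.
- by rewrite -trmx_mul Av linearZ.
Qed.

Lemma unitmx_1B A :
  (forall v : 'cV_n, A *m v = v -> v = 0) -> 1%:M - A \in unitmx.
Proof.
move=> Afix; have /negP : ~ eigenvalue A 1.
  by case/eigenvalue_colP => v; rewrite scale1r => /Afix ->; rewrite eqxx.
by rewrite eigenvalue_unitmx negbK -(unitmxZ _ (unitrN1 _)) scaleN1r opprB.
Qed.

End Eigenvalues.

Lemma mul_enum_mx_col (R : pzRingType) (T : finType) (E : T -> T -> R)
    (z : T -> R) :
  (\matrix_(i < #|T|, j < #|T|) E (enum_val i) (enum_val j))
    *m (\col_(i < #|T|) z (enum_val i))
  = \col_(i < #|T|) \sum_t E (enum_val i) t * z t.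
Proof.
apply/matrixP => i k; rewrite !mxE (big_enum_val (fun t => E (enum_val i) t * z t)).
by apply: eq_bigr => j _; rewrite !mxE.
Qed.

Lemma col_enum_rank (R : Type) (T : finType) (v : 'cV[R]_#|T|) :
  v = \col_(i < #|T|) v (enum_rank (enum_val i)) 0.
Proof. by apply/matrixP => i k; rewrite mxE enum_valK ord1. Qed.

Section Descendants.
Variables (R : numFieldType) (lL g : R).

(* [desc d a b]: expected number of individuals at generation distance [d]
   below a given infective, in a household with [a] susceptibles and [b]
   infectives; at most [2 a + b] events remain, which is enough fuel. *)
Fixpoint desc_fuel (n d a b : nat) : R :=
  match n with
  | O => 0
  | n'.+1 =>
    if b == 0%N then 0 else
    (a%:R * lL * (d == 1%N)%:R + b%:R * a%:R * lL * desc_fuel n' d a.-1 b.+1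
     + a%:R * lL * desc_fuel n' d.-1 a.-1 b.+1
     + b.-1%:R * g * desc_fuel n' d a b.-1)
    / (b%:R * (a%:R * lL + g))
  end.

Definition desc d a b := desc_fuel (2 * a + b) d a b.

Lemma desc_rec d a b : (0 < a)%N -> (0 < b)%N ->
  desc d a b =
  (a%:R * lL * (d == 1%N)%:R + b%:R * a%:R * lL * desc d a.-1 b.+1
   + a%:R * lL * desc d.-1 a.-1 b.+1 + b.-1%:R * g * desc d a b.-1)
  / (b%:R * (a%:R * lL + g)).
Proof.
move=> a_gt0 b_gt0; rewrite /desc.
have -> : (2 * a + b = (2 * a.-1 + b.+1).+1)%N by lia.
have -> : (2 * a + b.-1 = 2 * a.-1 + b.+1)%N by lia.
by rewrite /= -[b == 0%N]negbK -lt0n b_gt0.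
Qed.

Lemma desc_fuel_dist0 n a b : desc_fuel n 0 a b = 0.
Proof.
elim: n a b => [//|n IHn] a b /=.
by case: (b == 0%N) => //; rewrite !IHn !mulr0 !addr0 mul0r.
Qed.

Lemma desc_dist0 a b : desc 0 a b = 0.
Proof. exact: desc_fuel_dist0. Qed.

(* Each generation step uses up a susceptible. *)
Lemma desc_fuel_far n d a b : (a < d)%N -> desc_fuel n d a b = 0.
Proof.
elim: n d a b => [//|n IHn] d a b lt_ad /=.
case: (b == 0%N) => //; rewrite [desc_fuel n d a b.-1]IHn //.
case: a lt_ad => [|a] lt_ad; first by rewrite !(mul0r, mulr0, add0r).
have -> : (d == 1%N) = false by apply/negbTE; lia.
by rewrite !IHn; try lia; rewrite !(mulr0, addr0) mul0r.
Qed.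

Lemma desc_far d a b : (a < d)%N -> desc d a b = 0.
Proof. exact: desc_fuel_far. Qed.

Lemma desc_sus0 d b : desc d 0 b = 0.
Proof.
case: d => [|d]; first exact: desc_dist0.
exact: desc_far.
Qed.

Hypotheses (lL_gt0 : 0 < lL) (g_gt0 : 0 < g).

Lemma desc_fuel_ge0 n d a b : 0 <= desc_fuel n d a b.
Proof.
elim: n d a b => [//|n IHn] d a b /=.
case: (b == 0%N) => //.
have [lL0 g0] := (ltW lL_gt0, ltW g_gt0).
by apply: divr_ge0; do ?[apply: addr_ge0 | apply: mulr_ge0].
Qed.

Lemma desc_ge0 d a b : 0 <= desc d a b.
Proof. exact: desc_fuel_ge0. Qed.

End Descendants.

Section GeneratingFunction.
Variables (R : numFieldType) (h : nat) (lL g x : R).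
Hypotheses (lL_gt0 : 0 < lL) (g_gt0 : 0 < g) (x_neq0 : x != 0).

Definition desc_gf a b := 1 + \sum_(k < h) desc lL g k a b / x ^+ k.

Lemma desc_gf_sus0 b : desc_gf 0 b = 1.
Proof. by rewrite /desc_gf big1 ?addr0 // => k _; rewrite desc_sus0 mul0r. Qed.

Lemma sum_dist1 : (1 < h)%N -> \sum_(k < h) (k == 1%N :> nat)%:R / x ^+ k = x^-1.
Proof.
move=> h_gt1; rewrite (bigD1 (Ordinal h_gt1)) //= mul1r expr1 big1 ?addr0 //.
by move=> k /negbTE; rewrite -val_eqE /= => ->; rewrite mul0r.
Qed.

(* The top term of the right-hand sum vanishes by [desc_far]. *)
Lemma sum_desc_shift a b : (0 < a)%N -> (a < h)%N ->
  \sum_(k < h) desc lL g k.-1 a.-1 b / x ^+ k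
  = (\sum_(k < h) desc lL g k a.-1 b / x ^+ k) / x.
Proof.
case: h => [//|n] a_gt0 lt_an.
rewrite big_ord_recl [in RHS]big_ord_recr /= desc_dist0 desc_far; last by lia.
rewrite !mul0r add0r addr0 mulr_suml; apply: eq_bigr => k _.
by rewrite add0n /bump leq0n add1n exprSr invfM mulrA.
Qed.

Lemma desc_gf_rec a b : (0 < a)%N -> (0 < b)%N -> (a < h)%N -> (1 < h)%N ->
  b%:R * (a%:R * lL + g) * desc_gf a b =
  b%:R * a%:R * lL * desc_gf a.-1 b.+1 + b.-1%:R * g * desc_gf a b.-1 + g
  + a%:R * lL * desc_gf a.-1 b.+1 / x.
Proof.
move=> a_gt0 b_gt0 lt_ah h_gt1.
have rate_gt0 : 0 < b%:R * (a%:R * lL + g).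
  by rewrite mulr_gt0 ?ltr0n // ltr_wpDl ?mulr_ge0 ?ler0n ?ltW.
have expand k : b%:R * (a%:R * lL + g) * (desc lL g k a b / x ^+ k) =
    a%:R * lL * ((k == 1%N)%:R / x ^+ k)
    + b%:R * a%:R * lL * (desc lL g k a.-1 b.+1 / x ^+ k)
    + a%:R * lL * (desc lL g k.-1 a.-1 b.+1 / x ^+ k)
    + b.-1%:R * g * (desc lL g k a b.-1 / x ^+ k).
  rewrite desc_rec // [_ / _ / _]mulrAC mulrCA divff ?mulr1; last by rewrite gt_eqF.
  by rewrite !mulrDl -!mulrA.
rewrite /desc_gf mulrDr mulr1 mulr_sumr (eq_bigr _ (fun (k : 'I_h) _ => expand k)).
rewrite !big_split /= -!mulr_sumr sum_dist1 // sum_desc_shift //.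
have -> : b.-1%:R = b%:R - 1 :> R by rewrite -subn1 natrB.
by field.
Qed.

End GeneratingFunction.

Section GenerationProfiles.
Variables (V : nmodType) (h : nat).
Implicit Type b : nat -> nat.

Lemma sum_incr b m (F : nat -> V) : (m < h)%N ->
  \sum_(j < h) F j *+ incr b m j = \sum_(j < h) F j *+ b j + F m.
Proof.
move=> lt_mh; rewrite (bigD1 (Ordinal lt_mh)) // [in RHS](bigD1 (Ordinal lt_mh)) //=.
rewrite /incr eqxx mulrSr addrAC; congr (_ + _ + _).
by apply: eq_bigr => j /negbTE; rewrite -val_eqE /= => ->.
Qed.

Lemma sum_decr b m (F : nat -> V) : (m < h)%N -> (0 < b m)%N ->
  \sum_(j < h) F j *+ decr b m j + F m = \sum_(j < h) F j *+ b j.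
Proof.
move=> lt_mh bm_gt0.
rewrite (bigD1 (Ordinal lt_mh)) // [in RHS](bigD1 (Ordinal lt_mh)) //=.
rewrite /decr eqxx -[in RHS](prednK bm_gt0) mulrSr addrAC; congr (_ + _ + _).
by apply: eq_bigr => j /negbTE; rewrite -val_eqE /= => ->.
Qed.

End GenerationProfiles.

Section Infectives.
Variable h : nat.
Implicit Type b : nat -> nat.

Definition infectives b := (\sum_(j < h) b j)%N.

Lemma infectivesE b : infectives b = \sum_(j < h) 1 *+ b j.
Proof. by apply: eq_bigr => j _; rewrite natn. Qed.

Lemma leq_infectives b (j : 'I_h) : (b j <= infectives b)%N.
Proof. by rewrite /infectives (bigD1 j) //= leq_addr. Qed.

Lemma infectives_eq0 b (j : 'I_h) : infectives b = 0%N -> b j = 0%N.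
Proof. by move=> B0; have := leq_infectives b j; rewrite B0 leqn0 => /eqP. Qed.

Lemma infectives_incr b m : (m < h)%N -> infectives (incr b m) = (infectives b).+1.
Proof.
by move=> lt_mh; rewrite !infectivesE (sum_incr b (fun=> 1%R)) // -[(_ + 1)%R]/(_ + 1)%N addn1.
Qed.

Lemma infectives_decr b m : (m < h)%N -> (0 < b m)%N ->
  infectives (decr b m) = (infectives b).-1.
Proof.
move=> lt_mh bm_gt0; rewrite !infectivesE -(sum_decr (fun=> 1%R) lt_mh bm_gt0).
by rewrite -[(_ + 1)%R]/(_ + 1)%N addn1.
Qed.

End Infectives.

Section Generations.
Variables (R : realType) (h : nat) (lL g : R).
Implicit Type b : nat -> nat.

Local Notation desc := (desc lL g).
Local Notation infectives := (infectives h).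

Definition first_step (E : nat -> (nat -> nat) -> R) i a b : R :=
  if infectives b == 0%N then 0 else
  let rate := (infectives b)%:R * (a%:R * lL + g) in
  \sum_(j < h) ((b j)%:R * a%:R * lL / rate) *
               ((j.+1 == i)%:R + E a.-1 (incr b j.+1))
  + \sum_(j < h) ((b j)%:R * g / rate) * E a (decr b j).

Lemma EgenS k i a b : Egen h lL g k.+1 i a b = first_step (Egen h lL g k i) i a b.
Proof. by []. Qed.

Lemma first_step_sus0 E i b : (forall b', E 0%N b' = 0) -> first_step E i 0 b = 0.
Proof.
move=> E0; rewrite /first_step; case: eqP => // _.
by rewrite !big1 ?addr0 // => j _; rewrite ?E0 mulr0 ?mul0r.
Qed.

Lemma Egen_sus0 k i b : Egen h lL g k i 0 b = 0.
Proof. by elim: k b => [//|k IHk] b; rewrite EgenS first_step_sus0. Qed.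

Definition desc_profile i a b := \sum_(j < h) desc (i - j) a (infectives b) *+ b j.

(* An infective of generation [j] has no descendants beyond generation
   [j + a], so while [j + a < h] the truncation of generations at [h] in
   [Egen] is harmless. *)
Definition gen_bounded a b := forall j, (j < h)%N -> (0 < b j)%N -> (j + a < h)%N.

Lemma gen_bounded_incr a b j : (j < h)%N -> (0 < b j)%N -> gen_bounded a.+1 b ->
  gen_bounded a (incr b j.+1).
Proof.
move=> lt_jh bj_gt0 bb l lt_lh; have := bb j lt_jh bj_gt0.
by rewrite /incr; case: eqP => [-> | _ _ /(bb l lt_lh)]; lia.
Qed.

Lemma gen_bounded_decr a b j : gen_bounded a b -> gen_bounded a (decr b j).
Proof.
move=> bb l lt_lh; rewrite /decr; case: eqP => [_ bl_gt1 | _]; last exact: bb.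
by apply: bb => //; lia.
Qed.

Lemma first_step_congr E E' i a b :
  (forall j, (j < h)%N -> (0 < b j)%N ->
     E a.-1 (incr b j.+1) = E' a.-1 (incr b j.+1) /\ E a (decr b j) = E' a (decr b j)) ->
  first_step E i a b = first_step E' i a b.
Proof.
move=> EE'; rewrite /first_step; case: eqP => // _.
congr (_ + _); apply: eq_bigr => j _; case: (posnP (b j)) => [-> | bj_gt0];
  rewrite ?mul0r //; by have [e1 e2] := EE' j (ltn_ord j) bj_gt0; rewrite ?e1 ?e2.
Qed.

Lemma desc_profile_sus0 i b : desc_profile i 0 b = 0.
Proof. by rewrite /desc_profile big1 // => j _; rewrite desc_sus0 mul0rn. Qed.

Lemma desc_profile_incr i a b m : (m < h)%N ->
  desc_profile i a (incr b m)
  = \sum_(l < h) desc (i - l) a (infectives b).+1 *+ b l + desc (i - m) a (infectives b).+1.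
Proof.
move=> lt_mh; rewrite /desc_profile infectives_incr //.
exact: (sum_incr b (fun l => desc (i - l) a (infectives b).+1)).
Qed.

Lemma desc_profile_decr i a b m : (m < h)%N -> (0 < b m)%N ->
  desc_profile i a (decr b m)
  = \sum_(l < h) desc (i - l) a (infectives b).-1 *+ b l - desc (i - m) a (infectives b).-1.
Proof.
move=> lt_mh bm_gt0; rewrite /desc_profile infectives_decr //.
by rewrite -(sum_decr (fun l => desc (i - l) a (infectives b).-1) lt_mh bm_gt0) addrK.
Qed.

Lemma desc_profile_rec i a b : (0 < infectives b)%N ->
  let B := infectives b in
  desc_profile i a.+1 b =
  (a.+1%:R * lL * \sum_(j < h) (b j)%:R * ((j.+1 == i)%:R + desc (i - j.+1) a B.+1)
   + B%:R * a.+1%:R * lL * \sum_(j < h) (b j)%:R * desc (i - j) a B.+1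
   + B.-1%:R * g * \sum_(j < h) (b j)%:R * desc (i - j) a.+1 B.-1)
  / (B%:R * (a.+1%:R * lL + g)).
Proof.
move=> B_gt0 B; rewrite /desc_profile -/B.
have termE (j : 'I_h) : desc (i - j) a.+1 B *+ b j =
   (a.+1%:R * lL * ((b j)%:R * ((j.+1 == i)%:R + desc (i - j.+1) a B.+1))
    + B%:R * a.+1%:R * lL * ((b j)%:R * desc (i - j) a B.+1)
    + B.-1%:R * g * ((b j)%:R * desc (i - j) a.+1 B.-1)) / (B%:R * (a.+1%:R * lL + g)).
  have dist1 : (i - j == 1)%N = (j.+1 == i) by apply/eqP/eqP; lia.
  by rewrite -[LHS]mulr_natl desc_rec // dist1 -subnS; ring.
by rewrite (eq_bigr _ (fun j _ => termE j)) -mulr_suml !big_split /= -!mulr_sumr.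
Qed.

Lemma desc_profile_first_step i a b : gen_bounded a b ->
  first_step (desc_profile i) i a b = desc_profile i a b.
Proof.
case: a => [|a] bb.
  by rewrite first_step_sus0 => [|b']; rewrite desc_profile_sus0.
rewrite /first_step; case: eqP => [B0 | /eqP B_neq0].
  by rewrite /desc_profile big1 // => j _; rewrite (infectives_eq0 j B0).
have B_gt0 : (0 < infectives b)%N by rewrite lt0n.
rewrite desc_profile_rec //; set B := infectives b; set rate := B%:R * _.
set S1 := \sum_(l < h) (b l)%:R * desc (i - l) a B.+1.
set S2 := \sum_(l < h) (b l)%:R * desc (i - l) a.+1 B.-1.
have incrE (j : 'I_h) :
    (b j)%:R * a.+1%:R * lL / rate * ((j.+1 == i)%:R + desc_profile i a (incr b j.+1))
    = (b j)%:R * (a.+1%:R * lL / rate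
                  * (((j.+1 == i)%:R + desc (i - j.+1) a B.+1) + S1)).
  case: (posnP (b j)) => [-> | bj_gt0]; first by rewrite !mul0r.
  have lt_j1h : (j.+1 < h)%N by have := bb j (ltn_ord j) bj_gt0; lia.
  rewrite desc_profile_incr // /S1 addrAC addrA !mulrA.
  by under [in RHS]eq_bigr do rewrite mulr_natl.
have decrE (j : 'I_h) :
    (b j)%:R * g / rate * desc_profile i a.+1 (decr b j)
    = (b j)%:R * (g / rate * (- desc (i - j) a.+1 B.-1 + S2)).
  case: (posnP (b j)) => [-> | bj_gt0]; first by rewrite !mul0r.
  rewrite desc_profile_decr // /S2 addrC !mulrA.
  by under [in RHS]eq_bigr do rewrite mulr_natl.
rewrite (eq_bigr _ (fun j _ => incrE j)) (eq_bigr _ (fun j _ => decrE j)).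
have sumB : \sum_(j < h) (b j)%:R = B%:R :> R by rewrite natr_sum.
have sumN : \sum_(j < h) (b j)%:R * - desc (i - j) a.+1 B.-1 = - S2.
  by rewrite /S2 -sumrN; apply: eq_bigr => j _; rewrite mulrN.
rewrite !sum_mulr_addr sumB sumN.
have -> : B.-1%:R = B%:R - 1 :> R by rewrite -subn1 natrB.
by ring.
Qed.

Lemma Egen_desc k i a b : (2 * a + infectives b <= k)%N -> gen_bounded a b ->
  Egen h lL g k i a b = desc_profile i a b.
Proof.
elim: k a b => [|k IHk] a b fuel bb.
  have B0 : infectives b = 0%N by lia.
  by rewrite /desc_profile big1 // => j _; rewrite (infectives_eq0 j B0).
rewrite EgenS -desc_profile_first_step //.
case: a fuel bb => [|a] fuel bb.
  by rewrite !first_step_sus0 // => b'; rewrite (Egen_sus0, desc_profile_sus0).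
apply: first_step_congr => j lt_jh bj_gt0.
have lt_j1h : (j.+1 < h)%N by have := bb j lt_jh bj_gt0; lia.
split; apply: IHk.
- by rewrite infectives_incr //; lia.
- exact: gen_bounded_incr.
- have := leq_infectives b (Ordinal lt_jh).
  by rewrite infectives_decr //=; lia.
- exact: gen_bounded_decr.
Qed.

Lemma mu_desc i : (0 < h)%N -> mu h lL g i = (i == 0%N)%:R + desc i h.-1 1.
Proof.
move=> h_gt0; have b_init0 : b_init = incr (fun=> 0%N) 0 by [].
have B1 : infectives b_init = 1%N.
  by rewrite b_init0 infectives_incr // /infectives big1.
rewrite /mu Egen_desc ?B1; first last.
- by move=> j _; rewrite /b_init; case: eqP => // -> _; lia.
- by lia.
rewrite /desc_profile B1 (bigD1 (Ordinal h_gt0)) //= subn0 big1 ?addr0 //.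
by move=> j /negbTE; rewrite -val_eqE /= /b_init => ->.
Qed.

End Generations.

Lemma inord_gt0 n m : (0 < @inord n m)%N -> (m <= n)%N.
Proof. by case: (leqP m n) => // lt_nm; rewrite /inord /insubd insubF // ltnNge lt_nm. Qed.

Section HouseholdStates.
Variable h : nat.

Definition valid_state a b := [&& (0 < a)%N, (0 < b)%N & (a + b <= h)%N].

(* [None] whenever [(a, b)] is not a valid state; in particular [state 0 b]
   is the amalgamated type [(0,1)^*]. *)
Definition state a b : Stype h := insub (inord a, inord b).

Lemma Sab_valid (y : Sab h) : valid_state (sa y) (sb y).
Proof. exact: svalP y. Qed.

Lemma state_Sab (y : Sab h) : state (sa y) (sb y) = Some y.
Proof.
rewrite /state /sa /sb !inord_val.
by rewrite -surjective_pairing; exact: valK.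
Qed.

Lemma stateP a b y : state a b = Some y -> sa y = a /\ sb y = b.
Proof.
rewrite /state; case: insubP => // u /and3P[a_gt0 b_gt0 _] val_u [<-].
rewrite /sa /sb -[sval u]/(val u) val_u /=.
by rewrite !inordK // ltnS inord_gt0.
Qed.

Lemma state_sus0 b : state 0 b = None.
Proof. by rewrite /state insubF // /= (@inordK h 0). Qed.

Lemma state_valid a b : valid_state a b -> exists y, state a b = Some y.
Proof.
move=> ab_valid; rewrite /state; case: insubP => [u _ _ | ]; first by exists u.
move: ab_valid => /and3P[a_gt0 b_gt0 ab_le]; rewrite /= !inordK ?a_gt0 ?b_gt0 ?ab_le //; lia.
Qed.

(* Both transitions strictly decrease [2 a + b]. *)
Lemma descending_rec_eq0 (R : pzRingType) (e : Stype h -> R) (c1 c2 : Sab h -> R) :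
  e None = 0 ->
  (forall y, e (Some y) = c1 y * e (state (sa y).-1 (sb y).+1)
                          + (sb y).-1%:R * c2 y * e (state (sa y) (sb y).-1)) ->
  forall s, e s = 0.
Proof.
move=> eN eS; suff e0 n y : (2 * sa y + sb y <= n)%N -> e (Some y) = 0.
  by case=> // y; exact: (e0 _ y (leqnn _)).
elim: n y => [|n IHn] y; have /and3P[a_gt0 b_gt0 _] := Sab_valid y; first lia.
move=> le_n; rewrite eS.
have -> : e (state (sa y).-1 (sb y).+1) = 0.
  by case E: state => [y1|//]; have [ya yb] := stateP E; apply: IHn; lia.
case: (ltnP 1 (sb y)) => [b_gt1 | b_le1]; last first.
  by rewrite (_ : (sb y).-1 = 0%N) ?mul0r ?mulr0 ?addr0 //; lia.
case E: (state (sa y) _) => [y2|]; last by rewrite eN !mulr0 addr0.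
by have [ya yb] := stateP E; rewrite IHn ?mulr0 ?addr0 //; lia.
Qed.

End HouseholdStates.

Section RowSums.
Variables (R : realType) (h : nat) (lG lL g : R).
Implicit Type z : Stype h -> R.

Definition Prow z s := \sum_t Pent lL g s t * z t.
Definition Phirow z s := \sum_t Phient lG lL g s t * z t.

Lemma sum_Sab_at (c : bool) a b k z : (c -> valid_state h a b) ->
  \sum_(y : Sab h) (if [&& c, sa y == a & sb y == b] then k else 0) * z (Some y)
  = if c then k * z (state h a b) else 0.
Proof.
case: c => [/(_ isT)/state_valid[y0 y0E] | _]; last first.
  by rewrite big1 // => y _; rewrite mul0r.
have [ya yb] := stateP y0E; subst a b.
rewrite (bigD1 y0) //= !eqxx y0E big1 ?addr0 // => y ne_yy0.
case: ifP => [/andP[/eqP ya /eqP yb] | _]; last by rewrite mul0r.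
by move: y0E; rewrite -ya -yb state_Sab => -[y0E]; rewrite y0E eqxx in ne_yy0.
Qed.

Lemma sum_Sab_at1 a b k z : valid_state h a b ->
  \sum_(y : Sab h) (if (sa y == a) && (sb y == b) then k else 0) * z (Some y)
  = k * z (state h a b).
Proof. by move=> ab_valid; exact: (sum_Sab_at (c := true) k z (fun=> ab_valid)). Qed.

Lemma Prow_None z : Prow z None = 0.
Proof. by rewrite /Prow big1 // => t _; rewrite mul0r. Qed.

Lemma Phirow_None z : (2 <= h)%N -> Phirow z None = lG / g * z (state h h.-1 1).
Proof.
move=> h_ge2; rewrite /Phirow big_option /= mul0r add0r sum_Sab_at1 //.
by apply/and3P; split; lia.
Qed.

Lemma Prow_Some z y :
  Prow z (Some y) =
    (sa y)%:R * lL / ((sa y)%:R * lL + g) * z (state h (sa y).-1 (sb y).+1)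
    + (sb y).-1%:R * g / ((sb y)%:R * ((sa y)%:R * lL + g)) * z (state h (sa y) (sb y).-1).
Proof.
have /and3P[a_gt0 b_gt0 ab_le] := Sab_valid y.
rewrite /Prow big_option /=; under eq_bigr do rewrite mulrDl.
rewrite big_split /= !sum_Sab_at; first last.
- by move=> b_ge2; apply/and3P; split; lia.
- by move=> a_gt1; apply/and3P; split; lia.
have -> : (if (2 <= sb y)%N then (sb y).-1%:R * g / ((sb y)%:R * ((sa y)%:R * lL + g))
            * z (state h (sa y) (sb y).-1) else 0)
    = (sb y).-1%:R * g / ((sb y)%:R * ((sa y)%:R * lL + g)) * z (state h (sa y) (sb y).-1).
  by case: ifP => // b_lt2; rewrite (_ : (sb y).-1 = 0%N) ?mul0r //; lia.
case: (ltnP 1 (sa y)) => [a_gt1 | a_le1].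
  by rewrite (_ : (sa y == 1%N) = false) ?mul0r ?add0r //; apply/negbTE; lia.
have -> : sa y = 1%N by lia.
by rewrite eqxx /= add0r state_sus0 mul1r.
Qed.

Lemma Phirow_Some z y : (2 <= h)%N ->
  Phirow z (Some y) =
    (sa y)%:R * lL / ((sb y)%:R * ((sa y)%:R * lL + g)) * z (state h (sa y).-1 (sb y).+1)
    + lG / ((sb y)%:R * ((sa y)%:R * lL + g)) * z (state h h.-1 1).
Proof.
move=> h_ge2; have /and3P[a_gt0 b_gt0 ab_le] := Sab_valid y.
rewrite /Phirow big_option /=; under eq_bigr do rewrite mulrDl.
rewrite big_split /= sum_Sab_at ?sum_Sab_at1; first last.
- by move=> a_gt1; apply/and3P; split; lia.
- by apply/and3P; split; lia.
rewrite addrA; congr (_ + _); case: (ltnP 1 (sa y)) => [a_gt1 | a_le1].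
  by rewrite (_ : (sa y == 1%N) = false) ?mul0r ?add0r //; apply/negbTE; lia.
have -> : sa y = 1%N by lia.
by rewrite eqxx /= addr0 state_sus0 mul1r.
Qed.

End RowSums.

Section ReproductionMatrix.
Variables (R : realType) (h : nat) (lG lL g : R).
Hypotheses (h_ge2 : (2 <= h)%N) (lG_gt0 : 0 < lG) (lL_gt0 : 0 < lL) (g_gt0 : 0 < g).
Implicit Type z : Stype h -> R.

Local Notation Prow := (Prow lL g).
Local Notation Phirow := (Phirow lG lL g).

Definition col_of z : 'cV[R]_(nS h) := \col_i z (enum_val i).

Lemma col_ofE (v : 'cV[R]_(nS h)) : v = col_of (fun t => v (enum_rank t) 0).
Proof. exact: col_enum_rank. Qed.

Lemma col_ofK z s : col_of z (enum_rank s) 0 = z s.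
Proof. by rewrite mxE enum_rankK. Qed.

Lemma Pmx_col z : Pmx h lL g *m col_of z = col_of (Prow z).
Proof. exact: mul_enum_mx_col. Qed.

Lemma Phimx_col z : Phimx h lG lL g *m col_of z = col_of (Phirow z).
Proof. exact: mul_enum_mx_col. Qed.

Lemma unitmx_IP : 1%:M - Pmx h lL g \in unitmx.
Proof.
apply: unitmx_1B => v; rewrite [v]col_ofE Pmx_col.
set z := fun t => _; move=> zP; have Pz s : Prow z s = z s.
  by rewrite -[LHS]col_ofK zP col_ofK.
have z0 : forall s, z s = 0.
  apply: (descending_rec_eq0 (c1 := fun y => (sa y)%:R * lL / ((sa y)%:R * lL + g))
            (c2 := fun y => g / ((sb y)%:R * ((sa y)%:R * lL + g)))).
    by rewrite -Pz Prow_None.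
  by move=> y; rewrite -Pz Prow_Some !mulrA.
by apply/matrixP => i j; rewrite !mxE z0.
Qed.

Definition eigen_rows x z := forall s, Phirow z s = x * (z s - Prow z s).

Lemma Mmx_col_eigen x z :
  Mmx h lG lL g *m col_of z = x *: col_of z <-> eigen_rows x z.
Proof.
have IP_unit := unitmx_IP.
have -> : (Mmx h lG lL g *m col_of z = x *: col_of z)
    <-> (Phimx h lG lL g *m col_of z = x *: ((1%:M - Pmx h lL g) *m col_of z)).
  by rewrite /Mmx -mulmxA scalemxAr; split=> [<- | ->]; rewrite ?mulKVmx ?mulKmx.
rewrite Phimx_col mulmxBl mul1mx Pmx_col; split=> [zE s | zE].
  have := congr1 (fun v : 'cV_(nS h) => v (enum_rank s) 0) zE.
  by rewrite /= !mxE enum_rankK.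
by apply/matrixP => i j; rewrite !mxE zE.
Qed.

Lemma eigenvalue_MmxP x :
  reflect (exists2 z, eigen_rows x z & col_of z != 0) (eigenvalue (Mmx h lG lL g) x).
Proof.
apply: (iffP (eigenvalue_colP _ _)) => -[v]; last first.
  by move=> /Mmx_col_eigen Mz z_neq0; exists (col_of v).
by rewrite [v]col_ofE => /Mmx_col_eigen zE v_neq0; exists (fun t => v (enum_rank t) 0).
Qed.

(* Row [(a, b)] of [Phi z = x (I - P) z], multiplied by [b (a lL + g) / x],
   with the global term [lG z (h-1,1)] eliminated through row [(0,1)^*]. *)
Definition household_res x z (y : Sab h) :=
  (sb y)%:R * (sa y)%:R * lL * z (state h (sa y).-1 (sb y).+1)
  + (sb y).-1%:R * g * z (state h (sa y) (sb y).-1) + g * z None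
  + (sa y)%:R * lL * z (state h (sa y).-1 (sb y).+1) / x
  - (sb y)%:R * ((sa y)%:R * lL + g) * z (Some y).

Definition household_rec x z := forall y, household_res x z y = 0.

Lemma sus_rate_neq0 (y : Sab h) : (sa y)%:R * lL + g != 0.
Proof. by rewrite gt_eqF // ltr_wpDl ?mulr_ge0 ?ler0n ?ltW. Qed.

Lemma sb_neq0 (y : Sab h) : (sb y)%:R != 0 :> R.
Proof. by have /and3P[_ b_gt0 _] := Sab_valid y; rewrite pnatr_eq0 -lt0n. Qed.

Lemma eigen_rowsE x z : x != 0 ->
  eigen_rows x z <-> lG * z (state h h.-1 1) = x * g * z None /\ household_rec x z.
Proof.
move=> x_neq0; have [g_neq0 lG_neq0] : g != 0 /\ lG != 0 by rewrite !gt_eqF.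
have NoneE : Phirow z None = x * (z None - Prow z None)
    <-> lG * z (state h h.-1 1) = x * g * z None.
  rewrite Phirow_None // Prow_None subr0; split=> zN.
    by transitivity (g * (lG / g * z (state h h.-1 1))); [field | rewrite zN; ring].
  by transitivity (lG * z (state h h.-1 1) / g); [ring | rewrite zN; field].
have SomeE (y : Sab h) : lG * z (state h h.-1 1) = x * g * z None ->
    Phirow z (Some y) - x * (z (Some y) - Prow z (Some y))
    = x / ((sb y)%:R * ((sa y)%:R * lL + g)) * household_res x z y.
  move=> zN; have zN' : z (state h h.-1 1) = x * g * z None / lG by rewrite -zN; field.
  rewrite Phirow_Some // Prow_Some /household_res zN'; field.
  by rewrite x_neq0 sus_rate_neq0 sb_neq0.
have factor_neq0 (y : Sab h) : x / ((sb y)%:R * ((sa y)%:R * lL + g)) != 0.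
  by rewrite mulf_neq0 // invr_eq0 mulf_neq0 ?sus_rate_neq0 ?sb_neq0.
split=> [rows | [zN res0] [y|]]; last exact/NoneE.
  have zN := NoneE.1 (rows None); split=> // y.
  have /eqP := rows (Some y).
  by rewrite -subr_eq0 SomeE // mulf_eq0 (negbTE (factor_neq0 y)) => /eqP.
by apply/eqP; rewrite -subr_eq0 SomeE // res0 mulr0.
Qed.

Lemma household_res_lin x z1 z2 c y :
  household_res x (fun s => z1 s - c * z2 s) y
  = household_res x z1 y - c * household_res x z2 y.
Proof. by rewrite /household_res; ring. Qed.

Lemma household_rec_eq0 x z : x != 0 -> household_rec x z -> z None = 0 ->
  forall s, z s = 0.
Proof.
move=> x_neq0 zrec zN.
apply: (descending_rec_eq0
  (c1 := fun y => (sa y)%:R * lL / ((sa y)%:R * lL + g)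
                  + (sa y)%:R * lL / (x * ((sb y)%:R * ((sa y)%:R * lL + g))))
  (c2 := fun y => g / ((sb y)%:R * ((sa y)%:R * lL + g)))) => // y.
have /subr0_eq zS := zrec y; rewrite zN mulr0 addr0 in zS.
apply: (mulfI (mulf_neq0 (sb_neq0 y) (sus_rate_neq0 y))); rewrite -zS.
by field; rewrite x_neq0 sus_rate_neq0 sb_neq0.
Qed.

Definition gf_vec x (s : Stype h) : R :=
  if s is Some y then desc_gf h lL g x (sa y) (sb y) else 1.

Lemma gf_vec_state x a b : a = 0%N \/ valid_state h a b ->
  gf_vec x (state h a b) = desc_gf h lL g x a b.
Proof.
case=> [-> | /state_valid[y yE]]; first by rewrite state_sus0 desc_gf_sus0.
by have [ya yb] := stateP yE; rewrite yE /= ya yb.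
Qed.

Lemma household_rec_gf x : x != 0 -> household_rec x (gf_vec x).
Proof.
move=> x_neq0 y; have /and3P[a_gt0 b_gt0 ab_le] := Sab_valid y.
rewrite /household_res /= gf_vec_state; last first.
  by case: (ltnP 1 (sa y)) => ?; [right; apply/and3P; split | left]; lia.
have -> : (sb y).-1%:R * g * gf_vec x (state h (sa y) (sb y).-1)
          = (sb y).-1%:R * g * desc_gf h lL g x (sa y) (sb y).-1.
  case: (ltnP 1 (sb y)) => [b_gt1 | b_le1].
    by rewrite gf_vec_state //; right; apply/and3P; split; lia.
  by rewrite (_ : (sb y).-1 = 0%N) ?mul0r //; lia.
by rewrite desc_gf_rec ?mulr1 ?subrr //; lia.
Qed.

Lemma eigenvalue_Mmx_gf x : x != 0 ->
  eigenvalue (Mmx h lG lL g) x <-> lG * desc_gf h lL g x h.-1 1 = x * g.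
Proof.
have state_top : valid_state h h.-1 1 by apply/and3P; split; lia.
move=> x_neq0; split=> [/eigenvalue_MmxP[z /(eigen_rowsE _ x_neq0)[zN zrec] z_neq0] | gfN].
  have zE s : z s = z None * gf_vec x s.
    apply/eqP; rewrite -subr_eq0; apply/eqP; move: s.
    apply: (household_rec_eq0 x_neq0) => /=.
      by move=> y; rewrite household_res_lin zrec household_rec_gf // mulr0 subr0.
    by rewrite mulr1 subrr.
  have zN_neq0 : z None != 0.
    apply: contraNneq z_neq0 => zN0; apply/eqP/matrixP => i j.
    by rewrite !mxE zE zN0 mul0r.
  move: zN; rewrite zE gf_vec_state; last by right.
  by move=> zN; apply: (mulIf zN_neq0); rewrite -zN; ring.
apply/eigenvalue_MmxP; exists (gf_vec x).
  apply/eigen_rowsE => //; split; last exact: household_rec_gf.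
  by rewrite gf_vec_state ?mulr1; last right.
apply: contraTneq isT => /matrixP/(_ (enum_rank None) 0).
by rewrite col_ofK mxE => /eqP; rewrite oner_eq0.
Qed.

End ReproductionMatrix.

Section GenerationalEquation.
Variables (R : realType) (h : nat) (lG lL g : R).
Hypotheses (h_ge2 : (2 <= h)%N) (lG_gt0 : 0 < lG) (lL_gt0 : 0 < lL) (g_gt0 : 0 < g).

Let h_gt0 : (0 < h)%N. Proof. exact: ltnW. Qed.

Definition charF x := muG lG g * \sum_(k < h) mu h lL g k / x ^+ k.

Lemma sum_mu_gf x : \sum_(k < h) mu h lL g k / x ^+ k = desc_gf h lL g x h.-1 1.
Proof.
under eq_bigr => k _ do rewrite mu_desc // mulrDl.
rewrite big_split /= (bigD1 (Ordinal h_gt0)) //= expr0 divr1 big1 ?addr0 //.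
by move=> k /negbTE; rewrite -val_eqE /= => ->; rewrite mul0r.
Qed.

Lemma eigenvalue_Mmx_charF x : x != 0 -> eigenvalue (Mmx h lG lL g) x <-> charF x = x.
Proof.
move=> x_neq0; rewrite eigenvalue_Mmx_gf // /charF /muG sum_mu_gf.
have g_neq0 : g != 0 by rewrite gt_eqF.
set gf := desc_gf _ _ _ _ _ _.
split=> eq_x.
  by rewrite mulrAC eq_x mulfK.
by rewrite -[in RHS]eq_x mulrAC divfK.
Qed.

Lemma Amx_col0 (v : 'rV[R]_h) :
  (v *m Amx h lG lL g) 0 (Ordinal h_gt0) = muG lG g * \sum_(k < h) v 0 k * mu h lL g k.
Proof. by rewrite mxE mulr_sumr; apply: eq_bigr => k _; rewrite mxE /= mulrCA. Qed.

Lemma Amx_colS (v : 'rV[R]_h) j (lt_j1h : (j.+1 < h)%N) :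
  (v *m Amx h lG lL g) 0 (Ordinal lt_j1h) = v 0 (Ordinal (ltnW lt_j1h)).
Proof.
rewrite mxE (bigD1 (Ordinal (ltnW lt_j1h))) //= mxE /= eqxx mulr1 big1 ?addr0 //.
by move=> k /negbTE; rewrite -val_eqE /= mxE /= eqSS eq_sym => ->; rewrite mulr0.
Qed.

Lemma eigenvalue_Amx_charF x : x != 0 -> eigenvalue (Amx h lG lL g) x <-> charF x = x.
Proof.
move=> x_neq0; split=> [/eigenvalueP[v vA v_neq0] | Fx]; last first.
  apply/eigenvalueP; exists (\row_(k < h) (x ^+ k)^-1); last first.
    apply: contraTneq isT => /matrixP/(_ 0 (Ordinal h_gt0)).
    by rewrite !mxE expr0 invr1 => /eqP; rewrite oner_eq0.
  apply/matrixP => i [[|j] lt_jh]; rewrite ord1 [RHS]mxE [in RHS]mxE.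
    rewrite (_ : Ordinal lt_jh = Ordinal h_gt0); last exact: val_inj.
    rewrite Amx_col0 /= expr0 invr1 mulr1 -[RHS]Fx; congr (_ * _).
    by apply: eq_bigr => k _; rewrite mxE mulrC.
  by rewrite Amx_colS mxE /= exprS invfM mulrA divff ?mul1r.
set v0 := v 0 (Ordinal h_gt0).
have vE k (lt_kh : (k < h)%N) : v 0 (Ordinal lt_kh) = (x ^+ k)^-1 * v0.
  elim: k lt_kh => [|k IHk] lt_kh.
    by rewrite expr0 invr1 mul1r; congr (v 0); apply: val_inj.
  have := congr1 (fun w : 'rV[R]_h => w 0 (Ordinal lt_kh)) vA.
  rewrite /= Amx_colS mxE IHk => vk; apply: (mulfI x_neq0).
  by rewrite -vk exprS invfM !mulrA divff ?mul1r.
have v0_neq0 : v0 != 0.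
  apply: contraNneq v_neq0 => v00; apply/eqP/matrixP => i [k lt_kh].
  by rewrite ord1 mxE vE v00 mulr0.
have := congr1 (fun w : 'rV[R]_h => w 0 (Ordinal h_gt0)) vA.
rewrite /= Amx_col0 mxE -/v0 => v0E; apply: (mulIf v0_neq0); rewrite -v0E /charF -mulrA.
rewrite mulr_suml; congr (_ * _); apply: eq_bigr => -[k lt_kh] _.
by rewrite vE /=; ring.
Qed.

Lemma mu_ge0 k : 0 <= mu h lL g k.
Proof. by rewrite mu_desc // addr_ge0 ?ler0n ?desc_ge0. Qed.

Lemma mu0 : mu h lL g 0 = 1.
Proof. by rewrite mu_desc // desc_dist0 addr0. Qed.

Lemma muG_gt0 : 0 < muG lG g.
Proof. exact: divr_gt0. Qed.

Lemma charF_nonincr x y : 0 < y -> y <= x -> charF x <= charF y.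
Proof.
move=> y_gt0 le_yx; have x_gt0 := lt_le_trans y_gt0 le_yx.
rewrite /charF ler_wpM2l ?(ltW muG_gt0) // ler_sum // => k _.
rewrite ler_wpM2l ?mu_ge0 // lef_pV2 ?posrE ?exprn_gt0 //.
by rewrite lerXn2r // nnegrE ltW.
Qed.

Lemma charF_ge x : 0 < x -> muG lG g <= charF x.
Proof.
move=> x_gt0; rewrite /charF -{1}(mulr1 (muG lG g)) ler_wpM2l ?(ltW muG_gt0) //.
rewrite (bigD1 (Ordinal h_gt0)) //= mu0 expr0 divr1 lerDl sumr_ge0 // => k _.
by rewrite divr_ge0 ?mu_ge0 ?exprn_ge0 ?ltW.
Qed.

(* [charF x = x] is the characteristic equation of [A] divided by [x ^+ h.-1]. *)
Lemma charF_fixpoint : exists2 r, 0 < r & charF r = r.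
Proof.
set S := muG lG g * \sum_(k < h) mu h lL g k.
pose p : {poly R} := 'X^h - muG lG g *: \sum_(k < h) mu h lL g k *: 'X^(h.-1 - k).
have pE x : 0 < x -> p.[x] = x ^+ h.-1 * (x - charF x).
  move=> x_gt0; rewrite /p hornerD hornerN hornerZ horner_sum hornerXn /charF.
  rewrite mulrBr -exprSr (prednK h_gt0); congr (_ - _).
  rewrite mulrCA; congr (_ * _); rewrite mulr_sumr; apply: eq_bigr => k _.
  rewrite hornerZ hornerXn expfB_cond; first by rewrite mulrCA.
  by rewrite (gt_eqF x_gt0) add0n -ltnS (prednK h_gt0).
have charF1 : charF 1 = S by rewrite /charF; under eq_bigr do rewrite expr1n divr1.
have S_ge : muG lG g <= S by rewrite -charF1 charF_ge.
have [r /andP[r_ge r_le] r_root] : exists2 r, muG lG g <= r <= 1 + S & root p r.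
  apply: poly_ivt; first by rewrite (le_trans S_ge) // lerDr.
  have b_ge1 : 1 <= 1 + S by rewrite lerDl (le_trans _ S_ge) // ltW ?muG_gt0.
  rewrite pE ?muG_gt0 // pE ?(lt_le_trans ltr01) //.
  rewrite pmulr_rle0 ?exprn_gt0 ?muG_gt0 // subr_le0 charF_ge ?muG_gt0 //=.
  rewrite pmulr_rge0 ?exprn_gt0 ?(lt_le_trans ltr01) // subr_ge0.
  by rewrite (le_trans (charF_nonincr ltr01 b_ge1)) // charF1 lerDr.
have r_gt0 : 0 < r by apply: lt_le_trans r_ge; exact: muG_gt0.
exists r => //; move: r_root; rewrite /root pE // mulf_eq0 expf_eq0 (gt_eqF r_gt0).
by rewrite andbF /= subr_eq0 => /eqP <-.
Qed.

End GenerationalEquation.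

Theorem mainTheorem3 (R : realType) (h : nat) (lG lL g : R) :
  (2 <= h)%N -> 0 < lG -> 0 < lL -> 0 < g ->
  exists r : R,
    [/\ eigenvalue (Mmx h lG lL g) r,
        eigenvalue (Amx h lG lL g) r,
        (forall x : R, eigenvalue (Mmx h lG lL g) x -> x <= r) &
        (forall x : R, eigenvalue (Amx h lG lL g) x -> x <= r)].
Proof.
move=> h_ge2 lG_gt0 lL_gt0 g_gt0.
have eigM := eigenvalue_Mmx_charF h_ge2 lG_gt0 lL_gt0 g_gt0.
have eigA := eigenvalue_Amx_charF lG lL g h_ge2.
have [r r_gt0 Fr] := charF_fixpoint h_ge2 lG_gt0 lL_gt0 g_gt0.
have le_r x : (0 < x -> charF h lG lL g x = x) -> x <= r.
  move=> Fx; case: (lerP x 0) => [x_le0 | x_gt0]; first exact: le_trans x_le0 (ltW r_gt0).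
  rewrite leNgt; apply/negP => lt_rx.
  have := charF_nonincr h_ge2 lG_gt0 lL_gt0 g_gt0 r_gt0 (ltW lt_rx).
  by rewrite Fx // Fr leNgt lt_rx.
have r_neq0 : r != 0 by rewrite gt_eqF.
exists r; split; [exact/eigM | exact/eigA | |] => x eig_x; apply: le_r => x_gt0.
- by apply/eigM; rewrite ?gt_eqF.
- by apply/eigA; rewrite ?gt_eqF.
Qed.
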